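(* For every $n\ge1$, the set of transitive integer relations on $[n]$, ordered by the weak order on integer relations, is a lattice (though not a sublattice of the weak order on all integer relations), and the set of integer posets on $[n]$ (antisymmetric transitive integer relations) is a sublattice of this lattice of transitive integer relations.
   Context: An integer relation of size $n$ is a reflexive binary relation $R$ on $[n]=\{1,\dots,n\}$. Its increasing part is $\mathrm{Inc}(R)=\{(a,b)\in R: a<b\}$ and its decreasing part is $\mathrm{Dec}(R)=\{(b,a)\in R: a<b\}$. The weak order on integer relations: $R\le S$ iff $\mathrm{Inc}(S)\subseteq\mathrm{Inc}(R)$ and $\mathrm{Dec}(R)\subseteq\mathrm{Dec}(S)$. An integer poset is an integer relation that is antisymmetric and transitive. *)

(* Integer relations on [n] are modelled on 'I_n = {0,..,n-1}
   (an order-preserving relabelling of {1,..,n}); a relation is a finite set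
   of pairs, so equality of relations is extensional. *)
From mathcomp Require Import all_boot.
Set Implicit Arguments. Unset Strict Implicit. Unset Printing Implicit Defensive.

Definition relation (n : nat) := {set 'I_n * 'I_n}.

Definition is_int_rel n (R : relation n) : Prop := forall i : 'I_n, (i, i) \in R.

Definition weak_le n (R S : relation n) : Prop :=
  (forall a b : 'I_n, a < b -> (a, b) \in S -> (a, b) \in R) /\
  (forall a b : 'I_n, a < b -> (b, a) \in R -> (b, a) \in S).

Definition is_transitive_rel n (R : relation n) : Prop :=
  forall a b c : 'I_n, (a, b) \in R -> (b, c) \in R -> (a, c) \in R.

Definition is_antisymmetric_rel n (R : relation n) : Prop :=
  forall a b : 'I_n, (a, b) \in R -> (b, a) \in R -> a = b.

Definition trans_int_rel n (R : relation n) : Prop :=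
  is_int_rel R /\ is_transitive_rel R.

Definition int_poset n (R : relation n) : Prop :=
  is_int_rel R /\ is_antisymmetric_rel R /\ is_transitive_rel R.

Definition is_join n (P : relation n -> Prop) (R S J : relation n) : Prop :=
  P J /\ weak_le R J /\ weak_le S J /\
  (forall U, P U -> weak_le R U -> weak_le S U -> weak_le J U).

Definition is_meet n (P : relation n -> Prop) (R S M : relation n) : Prop :=
  P M /\ weak_le M R /\ weak_le M S /\
  (forall U, P U -> weak_le U R -> weak_le U S -> weak_le U M).

Definition is_lattice n (P : relation n -> Prop) : Prop :=
  forall R S, P R -> P S ->
    (exists J, is_join P R S J) /\ (exists M, is_meet P R S M).

Definition is_sublattice n (P Q : relation n -> Prop) : Prop :=
  (forall R, P R -> Q R) /\
  (forall R S, P R -> P S ->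
     (forall J, is_join Q R S J -> P J) /\ (forall M, is_meet Q R S M -> P M)).

(* The meet of two transitive relations R and S in the weak order is obtained
   by closing the union of their increasing parts transitively, and keeping a
   decreasing pair (p, q) exactly when every decreasing pair (x, y) with x
   below p and y above q in that closure lies in both R and S (the
   "transitive decreasing deletion" of the paper); transitivity of R and S is
   what makes the result transitive.  Reversing [n] by i |-> n - 1 - i
   reverses the weak order and preserves transitivity, so joins are meets of
   the reversed relations.  Both constructions preserve antisymmetry, and
   joins and meets are unique, so integer posets form a sublattice.  Among
   all integer relations the join of {(2,1)} and {(1,0)} (plus the diagonal)
   is their union, which is not transitive. *)
From mathcomp Require Import all_boot zify.
Set Implicit Arguments. Unset Strict Implicit. Unset Printing Implicit Defensive.

Section ConnectInd.

Variables (T : finType) (e : rel T) (P : T -> T -> Prop).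
Hypothesis P_refl : forall x, P x x.

Lemma connect_ind_l :
  (forall x y z, e x y -> connect e y z -> P y z -> P x z) ->
  forall x z, connect e x z -> P x z.
Proof.
move=> P_cons x z /connectP [s]; elim: s x => [|y s IHs] x /=.
  by move=> _ ->.
case/andP => exy e_s z_last; apply: P_cons exy _ (IHs y e_s z_last).
by apply/connectP; exists s.
Qed.

Lemma connect_ind_r :
  (forall x y z, connect e x y -> e y z -> P x y -> P x z) ->
  forall x z, connect e x z -> P x z.
Proof.
move=> P_snoc x z /connectP [s]; elim/last_ind: s z => [|s y IHs] z /=.
  by move=> _ ->.
rewrite rcons_path last_rcons => /andP [e_s ey] ->.
apply: P_snoc ey (IHs _ e_s erefl); by apply/connectP; exists s.
Qed.

End ConnectInd.

Section Meet.

Variables (n : nat) (R S : relation n).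

Definition inc_edge : rel 'I_n :=
  fun x y => (x < y) && (((x, y) \in R) || ((x, y) \in S)).

Local Notation inc_conn := (connect inc_edge).

Definition dec_kept (p q : 'I_n) : bool :=
  [forall x, forall y, inc_conn x p ==> inc_conn q y ==> (y < x) ==>
     ((x, y) \in R) && ((x, y) \in S)].

Definition meet_rel : relation n :=
  [set pq | inc_conn pq.1 pq.2 || (pq.2 < pq.1) && dec_kept pq.1 pq.2].

Lemma meet_relE p q :
  ((p, q) \in meet_rel) = inc_conn p q || (q < p) && dec_kept p q.
Proof. by rewrite inE. Qed.

Lemma dec_keptP p q :
  reflect (forall x y, inc_conn x p -> inc_conn q y -> y < x ->
             (x, y) \in R /\ (x, y) \in S)
          (dec_kept p q).
Proof.
apply: (iffP forallP) => [K x y xp qy yx | K x].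
  by move: (K x) => /forallP /(_ y); rewrite xp qy yx => /andP.
apply/forallP => y; apply/implyP => xp; apply/implyP => qy; apply/implyP => yx.
by apply/andP; apply: K.
Qed.

Lemma inc_conn_leq x y : inc_conn x y -> x <= y.
Proof.
move: x y; apply: connect_ind_l => // x y z /andP [xy _] _.
exact: leq_trans (ltnW xy).
Qed.

Lemma dec_kept_conn p p' q q' :
  inc_conn p' p -> inc_conn q q' -> dec_kept p q -> dec_kept p' q'.
Proof.
move=> p'p qq' /dec_keptP K; apply/dec_keptP => x y xp' q'y.
by apply: K; [apply: connect_trans xp' p'p | apply: connect_trans qq' q'y].
Qed.

Hypotheses (tR : is_transitive_rel R) (tS : is_transitive_rel S).

Lemma inc_conn_dec_kept p q r :
  inc_conn p q -> dec_kept q r -> r < q -> p <= r -> inc_conn p r.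
Proof.
move=> pq; move: p q pq r; apply: (connect_ind_l (P := fun x z =>
  forall r, dec_kept z r -> r < z -> x <= r -> inc_conn x r)).
  by move=> x r _ rx xr; have := leq_ltn_trans xr rx; rewrite ltnn.
move=> x y z exy yz IH r Kzr rz xr.
have [yr | ry] := leqP y r; first exact: connect_trans (connect1 exy) (IH r Kzr rz yr).
case: (ltngtP x r) xr => // [{}xr | /val_inj ->] _; last exact: connect0.
have [yrR yrS] := dec_keptP _ _ Kzr y r yz (connect0 _ r) ry.
case/andP: exy => _ /orP [xyR | xyS]; apply: connect1; rewrite /inc_edge xr /=.
  by rewrite (tR xyR yrR).
by rewrite (tS xyS yrS) orbT.
Qed.

Lemma dec_kept_inc_conn p q r :
  dec_kept p q -> q < p -> inc_conn q r -> p <= r -> inc_conn p r.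
Proof.
move=> Kpq qp qr; move: q r qr Kpq qp; apply: (connect_ind_r (P := fun x z =>
  dec_kept p x -> x < p -> p <= z -> inc_conn p z)).
  by move=> x _ xp px; have := leq_ltn_trans px xp; rewrite ltnn.
move=> x y z xy eyz IH Kpx xp pz.
have [py | yp] := leqP p y; first exact: connect_trans (IH Kpx xp py) (connect1 eyz).
case: (ltngtP p z) pz => // [{}pz | /val_inj ->] _; last exact: connect0.
have [pyR pyS] := dec_keptP _ _ Kpx p y (connect0 _ p) xy yp.
case/andP: eyz => _ /orP [yzR | yzS]; apply: connect1; rewrite /inc_edge pz /=.
  by rewrite (tR pyR yzR).
by rewrite (tS pyS yzS) orbT.
Qed.

Lemma meet_rel_trans : is_transitive_rel meet_rel.
Proof.
move=> p q r; rewrite !meet_relE.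
case/orP => [pq | /andP [qp Kpq]]; case/orP => [qr | /andP [rq Kqr]].
- by rewrite (connect_trans pq qr).
- have Kpr : dec_kept p r by apply: dec_kept_conn pq (connect0 _ _) Kqr.
  have [rp | pr] := ltnP r p; first by apply/orP; right; apply/andP.
  by rewrite (inc_conn_dec_kept pq Kqr rq pr).
- have Kpr : dec_kept p r by apply: dec_kept_conn (connect0 _ _) qr Kpq.
  have [rp | pr] := ltnP r p; first by apply/orP; right; apply/andP.
  by rewrite (dec_kept_inc_conn Kpq qp qr pr).
- rewrite (ltn_trans rq qp) /=; apply/orP; right.
  apply/dec_keptP => x y xp ry yx.
  have [qy | yq] := leqP q y.
    exact: dec_keptP Kpq x y xp (dec_kept_inc_conn Kqr rq ry qy) yx.
  have [xq | qx] := leqP x q.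
    exact: dec_keptP Kqr x y (inc_conn_dec_kept xp Kpq qp xq) ry yx.
  have [xqR xqS] := dec_keptP _ _ Kpq x q xp (connect0 _ q) qx.
  have [qyR qyS] := dec_keptP _ _ Kqr q y (connect0 _ q) ry yq.
  by split; [apply: tR xqR qyR | apply: tS xqS qyS].
Qed.

Lemma inc_conn_sub (U : relation n) :
  trans_int_rel U -> weak_le U R -> weak_le U S ->
  forall x y, inc_conn x y -> (x, y) \in U.
Proof.
move=> [iU tU] [incR _] [incS _]; apply: connect_ind_l => // x y z.
case/andP=> xy /orP [xyR | xyS] _; apply: tU; by [apply: incR | apply: incS].
Qed.

Lemma meet_rel_is_meet : is_meet (@trans_int_rel n) R S meet_rel.
Proof.
have dec_meet (a b : 'I_n) : a < b -> (b, a) \in meet_rel -> (b, a) \in R /\ (b, a) \in S.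
  move=> ab; rewrite meet_relE => /orP [/inc_conn_leq | /andP [_ K]].
    by rewrite leqNgt ab.
  exact: dec_keptP K b a (connect0 _ b) (connect0 _ a) ab.
split; [|split; [|split]].
- split; last exact: meet_rel_trans.
  by move=> i; rewrite meet_relE connect0.
- split=> a b ab; last by move=> /(dec_meet _ _ ab) [].
  by move=> abR; rewrite meet_relE connect1 // /inc_edge ab abR.
- split=> a b ab; last by move=> /(dec_meet _ _ ab) [].
  by move=> abS; rewrite meet_relE connect1 // /inc_edge ab abS orbT.
- move=> U [iU tU] UR US; split=> a b ab.
    rewrite meet_relE => /orP [|/andP [ba _]]; first exact: inc_conn_sub.
    by have := ltn_trans ab ba; rewrite ltnn.
  move=> baU; rewrite meet_relE ab /=; apply/orP; right.
  apply/dec_keptP => x y xb ay yx.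
  have incU := inc_conn_sub (conj iU tU) UR US.
  have xyU : (x, y) \in U by apply: tU (tU _ _ _ (incU _ _ xb) baU) (incU _ _ ay).
  by split; [apply: UR.2 | apply: US.2].
Qed.

End Meet.

Lemma meet_rel_antisym n (R S : relation n) :
  is_antisymmetric_rel R -> is_antisymmetric_rel S ->
  is_antisymmetric_rel (meet_rel R S).
Proof.
move=> aR aS.
have no_cycle p q : connect (inc_edge R S) p q -> p < q -> ~~ dec_kept R S q p.
  case/connectP => [[|z s]] /=; first by move=> _ ->; rewrite ltnn.
  case/andP => /andP [pz pzRS] e_s lq _; apply/negP => /dec_keptP K.
  have zq : connect (inc_edge R S) z q by apply/connectP; exists s.
  have [zpR zpS] := K z p zq (connect0 _ p) pz.
  have eq_pz : p = z by case/orP: pzRS => h; [apply: aR h zpR | apply: aS h zpS].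
  by move: pz; rewrite eq_pz ltnn.
move=> p q; rewrite !meet_relE.
case/orP => [pq | /andP [qp Kpq]]; case/orP => [qp' | /andP [pq' Kqp]].
- by apply: val_inj; apply/eqP; rewrite eqn_leq (inc_conn_leq pq) (inc_conn_leq qp').
- by have := no_cycle _ _ pq pq'; rewrite Kqp.
- by have := no_cycle _ _ qp' qp; rewrite Kpq.
- by have := ltn_trans pq' qp; rewrite ltnn.
Qed.

Definition rev_rel n (R : relation n) : relation n :=
  [set pq | (rev_ord pq.1, rev_ord pq.2) \in R].

Lemma rev_relE n (R : relation n) a b :
  ((a, b) \in rev_rel R) = ((rev_ord a, rev_ord b) \in R).
Proof. by rewrite inE. Qed.

Lemma rev_relK n : involutive (@rev_rel n).
Proof. by move=> R; apply/setP => -[a b]; rewrite !rev_relE !rev_ordK. Qed.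

Lemma rev_ord_ltn n (a b : 'I_n) : (rev_ord a < rev_ord b) = (b < a).
Proof. have := ltn_ord a; have := ltn_ord b; rewrite /=; lia. Qed.

Lemma weak_le_rev n (A B : relation n) :
  weak_le A B -> weak_le (rev_rel B) (rev_rel A).
Proof.
move=> [incAB decAB]; split=> a b ab; rewrite !rev_relE.
  by apply: decAB; rewrite rev_ord_ltn.
by apply: incAB; rewrite rev_ord_ltn.
Qed.

Lemma trans_int_rel_rev n (R : relation n) :
  trans_int_rel R -> trans_int_rel (rev_rel R).
Proof.
move=> [iR tR]; split=> [i | a b c]; rewrite !rev_relE //; exact: tR.
Qed.

Lemma antisym_rev n (R : relation n) :
  is_antisymmetric_rel R -> is_antisymmetric_rel (rev_rel R).
Proof.
move=> aR a b; rewrite !rev_relE => ab ba.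
exact: rev_ord_inj (aR _ _ ab ba).
Qed.

Definition join_rel n (R S : relation n) : relation n :=
  rev_rel (meet_rel (rev_rel R) (rev_rel S)).

Lemma join_rel_is_join n (R S : relation n) :
  trans_int_rel R -> trans_int_rel S -> is_join (@trans_int_rel n) R S (join_rel R S).
Proof.
move=> /trans_int_rel_rev [_ tR'] /trans_int_rel_rev [_ tS'].
have [M_trans [MR [MS M_glb]]] := meet_rel_is_meet tR' tS'.
split; first exact: trans_int_rel_rev M_trans.
split; first by rewrite -{1}[R]rev_relK; apply: weak_le_rev.
split; first by rewrite -{1}[S]rev_relK; apply: weak_le_rev.
move=> U U_trans RU SU; rewrite -[U]rev_relK; apply: weak_le_rev.
by apply: M_glb; [apply: trans_int_rel_rev | apply: weak_le_rev | apply: weak_le_rev].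
Qed.

Lemma trans_int_rel_lattice n : is_lattice (@trans_int_rel n).
Proof.
move=> R S tR tS; split; first by exists (join_rel R S); apply: join_rel_is_join.
by exists (meet_rel R S); apply: meet_rel_is_meet; [apply: tR.2 | apply: tS.2].
Qed.

Lemma weak_le_anti n (A B : relation n) :
  is_int_rel A -> is_int_rel B -> weak_le A B -> weak_le B A -> A = B.
Proof.
move=> iA iB [incAB decAB] [incBA decBA]; apply/setP => -[a b].
case: (ltngtP a b) => [ab | ba | /val_inj ->]; last by rewrite iA iB.
- by apply/idP/idP; [apply: incBA | apply: incAB].
- by apply/idP/idP; [apply: decAB | apply: decBA].
Qed.

Section Uniqueness.

Variables (n : nat) (P : relation n -> Prop).
Hypothesis P_int_rel : forall U, P U -> is_int_rel U.

Lemma is_meet_unique R S M M' : is_meet P R S M -> is_meet P R S M' -> M = M'.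
Proof.
move=> [PM [MR [MS M_glb]]] [PM' [M'R [M'S M'_glb]]].
by apply: weak_le_anti; [apply: P_int_rel | apply: P_int_rel | apply: M'_glb | apply: M_glb].
Qed.

Lemma is_join_unique R S J J' : is_join P R S J -> is_join P R S J' -> J = J'.
Proof.
move=> [PJ [RJ [SJ J_lub]]] [PJ' [RJ' [SJ' J'_lub]]].
by apply: weak_le_anti; [apply: P_int_rel | apply: P_int_rel | apply: J_lub | apply: J'_lub].
Qed.

End Uniqueness.

Lemma int_poset_sublattice n : is_sublattice (@int_poset n) (@trans_int_rel n).
Proof.
split=> [R [iR [_ tR]] // | R S [iR [aR tR]] [iS [aS tS]]].
have int_of_trans (U : relation n) : trans_int_rel U -> is_int_rel U by case.
split=> [J HJ | M HM].
  have HJ' := join_rel_is_join (conj iR tR) (conj iS tS).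
  rewrite (is_join_unique int_of_trans HJ HJ').
  have [iJ tJ] := HJ'.1; split=> //; split=> //.
  by apply: antisym_rev; apply: meet_rel_antisym; apply: antisym_rev.
have HM' := meet_rel_is_meet tR tS.
rewrite (is_meet_unique int_of_trans HM HM').
have [iM tM] := HM'.1; split=> //; split=> //.
exact: meet_rel_antisym.
Qed.

Definition int_rel_join n (R S : relation n) : relation n :=
  [set pq : 'I_n * 'I_n | if pq.1 < pq.2 then (pq \in R) && (pq \in S) else (pq \in R) || (pq \in S)].

Lemma int_rel_join_is_join n (R S : relation n) :
  is_int_rel R -> is_int_rel S -> is_join (@is_int_rel n) R S (int_rel_join R S).
Proof.
move=> iR iS; split; first by move=> i; rewrite inE ltnn iR.
have dec_join (a b : 'I_n) : a < b -> (b, a) \in int_rel_join R S = ((b, a) \in R) || ((b, a) \in S).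
  by move=> ab; rewrite inE ltnNge ltnW.
split; [split=> a b ab | split; [split=> a b ab |]].
- by rewrite inE ab => /andP [].
- by rewrite dec_join // => ->.
- by rewrite inE ab => /andP [].
- by rewrite dec_join // => ->; rewrite orbT.
- move=> U _ [incRU decRU] [incSU decSU]; split=> a b ab.
    by rewrite inE ab => abU; rewrite incRU // incSU.
  by rewrite dec_join // => /orP [baR | baS]; [apply: decRU | apply: decSU].
Qed.

Definition arrow_rel n (u v : 'I_n) : relation n :=
  [set pq | (pq.1 == pq.2) || (pq == (u, v))].

Lemma arrow_rel_trans n (u v : 'I_n) : u != v -> trans_int_rel (arrow_rel u v).
Proof.
move=> uv; split=> [i | a b c]; rewrite !inE /= ?eqxx // !xpair_eqE.
case/orP => [/eqP -> // | /andP [/eqP -> /eqP ->]].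
case/orP => [/eqP <- | /andP [/eqP vu _]]; first by rewrite !eqxx orbT.
by rewrite vu eqxx in uv.
Qed.

Lemma trans_int_rel_not_sublattice n :
  2 < n -> ~ is_sublattice (@trans_int_rel n) (@is_int_rel n).
Proof.
case: n => [|[|[|m]]] // _ [_ closed].
pose a0 : 'I_m.+3 := ord0.
pose a1 := @Ordinal m.+3 1 isT; pose a2 := @Ordinal m.+3 2 isT.
have t21 : trans_int_rel (arrow_rel a2 a1) by apply: arrow_rel_trans.
have t10 : trans_int_rel (arrow_rel a1 a0) by apply: arrow_rel_trans.
have [_ tJ] := (closed _ _ t21 t10).1 _ (int_rel_join_is_join t21.1 t10.1).
by have := tJ a2 a1 a0; rewrite !inE /= eqxx => /(_ isT isT).
Qed.

Theorem mainTheorem5 (n : nat) (hn : 1 <= n) :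
  is_lattice (@trans_int_rel n) /\
  (3 <= n -> ~ is_sublattice (@trans_int_rel n) (@is_int_rel n)) /\
  is_sublattice (@int_poset n) (@trans_int_rel n).
Proof.
split; first exact: trans_int_rel_lattice.
split; [exact: trans_int_rel_not_sublattice | exact: int_poset_sublattice].
Qed.
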